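(* Let $N\ge 2$. Every isometry $T$ of $W_N$ (a bijection $T:W_N\to W_N$ with $\|T(\mathbf u)-T(\mathbf v)\|=\|\mathbf u-\mathbf v\|$ for all $\mathbf u,\mathbf v\in W_N$) satisfies $T(\mathbf 0)=\mathbf 0$, and consequently $T$ permutes the set of vertices $\{\mathbf v_1,\dots,\mathbf v_N\}$.
   Context: Let $N\ge 2$ be an integer and $\mathbb T=\{z\in\mathbb C:|z|=1\}$. For $\mathbf a=(a_1,\dots,a_{N-1})\in\mathbb R^{N-1}$ define $\mathbf c=(c_1,\dots,c_{N-1})\in\mathbb C^{N-1}$ by $c_j=\frac{\sqrt2}{2}(a_j+i\,a_{N-j})$ for $1\le j<N/2$, $c_{N/2}=a_{N/2}$ (only when $N$ is even), and $c_j=\frac{\sqrt2}{2}(a_{N-j}-i\,a_j)$ for $N/2<j\le N-1$ (so $c_{N-j}=\overline{c_j}$). Associate to $\mathbf a$ the monic polynomial $\mathbf a(x)=x^N+\sum_{n=1}^{N-1}c_nx^{N-n}+1$. Define $W_N=\{\mathbf a\in\mathbb R^{N-1}:\text{all roots of }\mathbf a(x)\text{ lie in }\mathbb T\}$, with the Euclidean metric; note $\mathbf 0\in W_N$ corresponds to $x^N+1$. Let $\zeta_N=e^{2\pi i/N}$. The vertices $\mathbf v_1,\dots,\mathbf v_N\in W_N$ are defined by $\mathbf v_n(x)=(x+\zeta_N^n)^N$, $1\le n\le N$. *)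

From HB Require Import structures.
From mathcomp Require Import all_boot all_order all_algebra.
From mathcomp Require Import reals trigo.
From mathcomp Require Import complex.

Set Implicit Arguments.
Unset Strict Implicit.
Unset Printing Implicit Defensive.

Import Order.TTheory GRing.Theory Num.Theory.
Local Open Scope ring_scope.

Section WN.
Variable R : realType.
Variable N : nat.

(* Points of R^(N-1): row vectors a = (a_1,...,a_(N-1)); a_j is stored
   at index j-1.  [acoord a j] is a_j for 1 <= j <= N-1 (and 0 otherwise). *)
Definition acoord (a : 'rV[R]_(N.-1)) (j : nat) : R :=
  if (1 <= j)%N then
    (if @insub _ (fun k => (k < N.-1)%N) 'I_(N.-1) j.-1 is Some k then a 0 k else 0)
  else 0.

Definition ccoef (a : 'rV[R]_(N.-1)) (j : nat) : R[i] :=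
  let s := Num.sqrt 2 / 2 in
  if (j.*2 < N)%N then Complex (s * acoord a j) (s * acoord a (N - j))
  else if (j.*2 == N)%N then Complex (acoord a j) 0
  else Complex (s * acoord a (N - j)) (- (s * acoord a j)).

Definition apoly (a : 'rV[R]_(N.-1)) : {poly R[i]} :=
  'X^N + \sum_(1 <= n < N) (ccoef a n)%:P * 'X^(N - n) + 1.

Definition WN (a : 'rV[R]_(N.-1)) : Prop :=
  forall z : R[i], root (apoly a) z -> `|z| = 1.

Definition edist (u v : 'rV[R]_(N.-1)) : R :=
  Num.sqrt (\sum_(j < N.-1) (u 0 j - v 0 j) ^+ 2).

Definition zetaN : R[i] :=
  Complex (cos (2 * pi / N%:R)) (sin (2 * pi / N%:R)).

Definition is_vertex (n : nat) (a : 'rV[R]_(N.-1)) : Prop :=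
  apoly a = ('X + (zetaN ^+ n)%:P) ^+ N.

End WN.

(* For a in W_N, c_k is up to sign the k-th elementary symmetric function of the
   N unimodular roots of a(x), so |c_k| <= binom(N,k).  The coordinates a_j are an
   orthonormal change of variables from the c_k, hence
   |a|^2 = sum_k |c_k|^2 <= r^2 := sum_(k=1)^(N-1) binom(N,k)^2, with equality only if
   |c_1| = N, i.e. all roots coincide, i.e. a is a vertex.  The vertices sum to 0,
   so the squared distances from a point p to them add up to N (r^2 + |p|^2).
   An isometry T of W_N maps W_N onto itself, so W_N lies in the ball of radius r
   around T 0; testing this at the vertices forces T 0 = 0.  Then T preserves the
   norm, hence permutes the points of W_N of norm r, which are the vertices. *)

From HB Require Import structures.
From mathcomp Require Import all_boot all_order all_algebra.
From mathcomp Require Import reals trigo complex.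
From mathcomp Require Import zify ring lra.
Set Implicit Arguments.
Unset Strict Implicit.
Unset Printing Implicit Defensive.

Import Order.TTheory GRing.Theory Num.Theory.
Local Open Scope ring_scope.
Local Open Scope complex_scope.

Lemma coef_XaddC_exp (R : nzRingType) (c : R) n j :
  (('X + c%:P) ^+ n)`_j = c ^+ (n - j) *+ 'C(n, j).
Proof.
elim: n j => [|n IH] j; first by rewrite expr0 coef1; case: j.
rewrite exprS mulrDl coefD coefXM coefCM; case: j => [|j] /=.
  by rewrite IH !bin0 subn0 !mulr1n exprS add0r.
rewrite !IH binS mulrnDr subSS addrC; congr (_ + _).
have [jn|nj] := ltnP j n; first by rewrite mulrnAr -exprS subnSK.
by rewrite bin_small ?mulr0n ?mulr0 ?ltnS.
Qed.

Lemma sum_exp_unity_root (R : idomainType) (w : R) n :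
  w ^+ n = 1 -> w != 1 -> \sum_(1 <= m < n.+1) w ^+ m = 0.
Proof.
move=> wn w1; rewrite big_add1 /= big_mkord.
under eq_bigr do rewrite exprS.
rewrite -mulr_sumr; apply/eqP; rewrite mulf_eq0; apply/orP; right.
have := subrX1 w n; rewrite wn subrr => /esym/eqP.
by rewrite mulf_eq0 subr_eq0 (negbTE w1).
Qed.

Section UnitRoots.
Context {C : numClosedFieldType} {r : seq C}.
Hypothesis r_unit : forall z, z \in r -> `|z| = 1.

Lemma prod_XsubC_coef_le i :
  `|(\prod_(z <- r) ('X - z%:P))`_i| <= ('C(size r, i))%:R.
Proof.
elim: r r_unit i => [|z s IH] s_unit i.
  by rewrite big_nil coef1; case: i => [|i]; rewrite ?normr1 ?normr0 ?bin0.
have z1 : `|z| = 1 by apply: s_unit; rewrite mem_head.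
have {}IH : forall i, `|(\prod_(w <- s) ('X - w%:P))`_i| <= ('C(size s, i))%:R.
  by apply: IH => w ws; apply: s_unit; rewrite inE ws orbT.
rewrite big_cons mulrBl coefB coefXM coefCM.
case: i => [|i] /=; first by rewrite sub0r normrN normrM z1 mul1r !bin0 (le_trans (IH 0%N)) ?bin0.
by rewrite binS natrD (le_trans (ler_normB _ _)) // normrM z1 mul1r addrC lerD.
Qed.

Lemma prod_XsubC_eq_exp : `|\sum_(z <- r) z| = (size r)%:R ->
  exists t, \prod_(z <- r) ('X - z%:P) = ('X - t%:P) ^+ size r.
Proof.
rewrite (big_nth 0) big_mkord => sum_r.
have r_nth (i : 'I_(size r)) : `|r`_i| = 1 by rewrite r_unit ?mem_nth.
have sum_norm : `|\sum_(i < size r) r`_i| = \sum_(i < size r) `|r`_i|.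
  by rewrite sum_r (eq_bigr _ (fun i _ => r_nth i)) sumr_const card_ord.
have [t _ rt] := normC_sum_eq1 sum_norm (fun i _ => r_nth i).
exists t; rewrite (big_nth 0) big_mkord (eq_bigr (fun=> 'X - t%:P)).
  by rewrite prodr_const card_ord.
by move=> i _; rewrite rt.
Qed.

End UnitRoots.

Section W_N.
Variable R : realType.
Variable N : nat.
Hypothesis N_ge2 : (2 <= N)%N.
Local Notation vec := 'rV[R]_(N.-1).
Local Notation C := R[i].

Lemma coef_apoly (a : vec) i : (apoly a)`_i =
  if i == N then 1 else if i == 0%N then 1
  else if (i < N)%N then ccoef a (N - i) else 0.
Proof.
rewrite /apoly !coefD coefXn coef1 coef_sum.
have -> : \sum_(1 <= n < N) ((ccoef a n)%:P * 'X^(N - n))`_i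
    = \sum_(1 <= n < N | n == (N - i)%N) ccoef a n.
  rewrite [RHS]big_mkcond /= !big_nat; apply: eq_bigr => n nN.
  rewrite coefCM coefXn.
  have -> : (i == (N - n)%N) = (n == (N - i)%N) by apply/eqP/eqP; lia.
  by case: eqP; rewrite ?mulr1 ?mulr0.
rewrite big_nat1_eq.
have N0 : (N == 0%N) = false by lia.
have [->|iN] := eqVneq i N; first by rewrite subnn /= N0 !addr0.
have [->|i0] := eqVneq i 0%N; first by rewrite subn0 ltnn andbF /= !add0r.
have -> : (0 < N - i < N)%N = (i < N)%N by lia.
by rewrite /= add0r addr0; case: ltnP.
Qed.

Lemma size_apoly (a : vec) : size (apoly a) = N.+1.
Proof.
apply/eqP; rewrite eqn_leq; apply/andP; split.
  by apply/leq_sizeP => j Nj; rewrite coef_apoly !ifF //; lia.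
rewrite ltnNge; apply/negP => /leq_sizeP /(_ N (leqnn N)).
by rewrite coef_apoly eqxx; apply/eqP; exact: oner_neq0.
Qed.

Lemma apoly_roots (a : vec) :
  {r : seq C | apoly a = \prod_(z <- r) ('X - z%:P) & size r = N}.
Proof.
have [r ar] := closed_field_poly_normal (apoly a).
have lead_a : lead_coef (apoly a) = 1 by rewrite lead_coefE size_apoly coef_apoly eqxx.
rewrite lead_a scale1r in ar; exists r => //.
by have := size_apoly a; rewrite ar size_prod_XsubC => -[].
Qed.

Lemma ccoef_coef (a : vec) k : (1 <= k < N)%N -> ccoef a k = (apoly a)`_(N - k).
Proof.
move=> kN; rewrite coef_apoly subKn; last by lia.
have -> : (N - k == N)%N = false by lia.
have -> : (N - k == 0)%N = false by lia.
by have -> : (N - k < N)%N by lia.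
Qed.

Lemma WN_roots_unit (a : vec) r : WN a -> apoly a = \prod_(z <- r) ('X - z%:P) ->
  forall z, z \in r -> `|z| = 1.
Proof. by move=> Wa ar z zr; apply: Wa; rewrite ar root_prod_XsubC. Qed.

Lemma WN_ccoef_le (a : vec) k : WN a -> (1 <= k < N)%N ->
  `|ccoef a k| <= ('C(N, k))%:R.
Proof.
move=> Wa kN; have [r ar sr] := apoly_roots a.
have r_unit := WN_roots_unit Wa ar.
rewrite ccoef_coef // ar -(bin_sub (ltnW (proj2 (andP kN)))) -sr.
exact: prod_XsubC_coef_le.
Qed.

Definition sqnorm (a : vec) : R := \sum_(j < N.-1) a 0 j ^+ 2.

Lemma sqnorm_ge0 (a : vec) : 0 <= sqnorm a.
Proof. by apply: sumr_ge0 => j _; apply: sqr_ge0. Qed.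

Lemma sqnorm_eq0 (a : vec) : sqnorm a = 0 -> a = 0.
Proof.
move/(psumr_eq0P (fun j _ => sqr_ge0 (a 0 j))) => a0.
by apply/rowP => j; apply/eqP; rewrite mxE -sqrf_eq0 a0.
Qed.

Lemma sqnormB (a b : vec) :
  sqnorm (a - b) = sqnorm a - 2 * \sum_(j < N.-1) a 0 j * b 0 j + sqnorm b.
Proof.
rewrite /sqnorm mulr_sumr -sumrB -big_split /=; apply: eq_bigr => j _.
by rewrite !mxE; ring.
Qed.

Lemma edistE (u v : vec) : edist u v = Num.sqrt (sqnorm (u - v)).
Proof. by congr Num.sqrt; apply: eq_bigr => j _; rewrite !mxE. Qed.

Lemma acoordS (a : vec) j (jN : (j < N.-1)%N) : acoord a j.+1 = a 0 (Ordinal jN).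
Proof.
rewrite /acoord /=; case: insubP => [k _ /= kj|]; last by rewrite jN.
by congr (a 0 _); apply: val_inj.
Qed.

Lemma sqnorm_acoord (a : vec) : sqnorm a = \sum_(1 <= j < N) acoord a j ^+ 2.
Proof.
rewrite big_add1 big_mkord; apply: eq_bigr => j _.
by rewrite (acoordS a (ltn_ord j)); congr (a 0 _ ^+ 2); apply: val_inj.
Qed.

Lemma sqr_norm_ccoef (a : vec) k : (1 <= k < N)%N ->
  `|ccoef a k| ^+ 2 = ((acoord a k ^+ 2 + acoord a (N - k) ^+ 2) / 2)%:C.
Proof.
move=> kN; rewrite -add_Re2_Im2 /ccoef; congr _%:C.
have sqrt2 : Num.sqrt 2 ^+ 2 = 2 :> R by rewrite sqr_sqrtr ?ler0n.
case: ifP => [_|_] /=; first by rewrite !exprMn sqrt2; field.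
case: ifP => [/eqP Nk|_] /=; last by rewrite sqrrN !exprMn sqrt2; field.
have -> : (N - k = k)%N by lia.
by rewrite expr0n addr0; field.
Qed.

Lemma sqnorm_ccoef (a : vec) : (sqnorm a)%:C = \sum_(1 <= k < N) `|ccoef a k| ^+ 2.
Proof.
rewrite (eq_big_nat _ _ (sqr_norm_ccoef a)) -rmorph_sum; congr _%:C.
rewrite -mulr_suml big_split /= sqnorm_acoord.
have -> : \sum_(1 <= k < N) acoord a (N - k) ^+ 2 = \sum_(1 <= k < N) acoord a k ^+ 2.
  by rewrite big_nat_rev; apply: eq_big_nat => k kN; congr (acoord a _ ^+ 2); lia.
by field.
Qed.

Definition sqradius : R := \sum_(1 <= k < N) ('C(N, k))%:R ^+ 2.

Lemma WN_sqnorm_le (a : vec) : WN a -> sqnorm a <= sqradius.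
Proof.
move=> Wa; rewrite -lecR sqnorm_ccoef rmorph_sum; apply: ler_sum_nat => k kN.
by rewrite rmorphXn rmorph_nat lerXn2r ?nnegrE ?ler0n ?WN_ccoef_le.
Qed.

Lemma WN_sqnorm_eq (a : vec) : WN a -> sqnorm a = sqradius ->
  exists t, apoly a = ('X - t%:P) ^+ N.
Proof.
move=> Wa a_max.
have slack : \sum_(1 <= k < N) (('C(N, k))%:R ^+ 2 - `|ccoef a k| ^+ 2) = 0 :> C.
  rewrite sumrB -sqnorm_ccoef a_max /sqradius rmorph_sum; apply/eqP; rewrite subr_eq0.
  by apply/eqP/eq_bigr => k _; rewrite rmorphXn rmorph_nat.
have /eqP := slack; rewrite big_nat psumr_eq0 => [/allP /(_ 1%N)|k kN]; last first.
  by rewrite subr_ge0 lerXn2r ?nnegrE ?ler0n ?WN_ccoef_le.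
rewrite mem_index_iota N_ge2 /= bin1 subr_eq0 eqrXn2 ?ler0n // => /(_ isT) /eqP c1.
have [r ar sr] := apoly_roots a.
have [|t rt] := prod_XsubC_eq_exp (WN_roots_unit Wa ar); last by exists t; rewrite ar rt sr.
rewrite sr c1 ccoef_coef ?ar; last by lia.
by rewrite -sr subn1 coefPn_prod_XsubC ?normrN // sr -lt0n (ltnW N_ge2).
Qed.

Local Notation zeta := (zetaN R N).
Local Notation theta := (2 * pi / N%:R : R).

Lemma zetaX k : zeta ^+ k = Complex (cos (k%:R * theta)) (sin (k%:R * theta)).
Proof.
elim: k => [|k IH]; first by rewrite expr0 mul0r cos0 sin0.
rewrite exprS IH /zetaN /=; apply/eqP; rewrite eq_complex /=.
rewrite -[k.+1]addn1 natrD [(k%:R + 1) * _]mulrDl mul1r cosD sinD.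
by apply/andP; split; apply/eqP; ring.
Qed.

Lemma norm_zeta : `|zeta| = 1.
Proof. by rewrite normc_def /zetaN /= cos2Dsin2 sqrtr1. Qed.

Lemma zetaXN : zeta ^+ N = 1.
Proof.
have N0 : (N%:R : R) != 0 by rewrite pnatr_eq0; lia.
rewrite zetaX (_ : N%:R * theta = pi *+ 2) ?cos2pi ?sin2pi //.
by rewrite mulrC mulrAC -mulrA divff // mulr1 mulr_natl.
Qed.

Lemma zetaX_neq1 k : (0 < k < N)%N -> zeta ^+ k != 1.
Proof.
move=> kN; rewrite zetaX; apply/negP => /eqP [] cos1 _.
have N0 : (0 : R) < N%:R by rewrite ltr0n; lia.
have k0 : (0 : R) < k%:R by rewrite ltr0n; lia.
have ltkN : (k%:R : R) < N%:R by rewrite ltr_nat; lia.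
set x := k%:R * theta in cos1.
have x_half : x / 2 = pi * (k%:R / N%:R) by rewrite /x; field; rewrite lt0r_neq0.
have sin_half : 0 < sin (x / 2).
  apply: sin_gt0_pi; rewrite x_half pmulr_lgt0 ?divr_gt0 ?pi_gt0 //=.
  by rewrite gtr_pMr ?pi_gt0 // ltr_pdivrMr // mul1r.
have x_twice : x = (x / 2) *+ 2 by rewrite -mulr_natr mulfVK ?pnatr_eq0.
move: cos1; rewrite x_twice cos_mulr2n => cos1.
have : sin (x / 2) ^+ 2 = 0 by rewrite sin2cos2; lra.
by move/eqP; rewrite sqrf_eq0 => /eqP sin0'; move: sin_half; rewrite sin0' ltxx.
Qed.

Lemma zeta_prim : N.-primitive_root zeta.
Proof.
have [m m_prim m_dvd] := prim_order_exists (ltnW N_ge2) zetaXN.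
have m_gt0 := prim_order_gt0 m_prim.
case: (ltngtP m N) m_prim => [ltmN|ltNm|-> //] m_prim.
  have /negP[] : zeta ^+ m != 1 by apply: zetaX_neq1; rewrite m_gt0 ltmN.
  by rewrite (prim_expr_order m_prim).
by move: (dvdn_leq (ltnW N_ge2) m_dvd); rewrite leqNgt ltNm.
Qed.

Lemma norm_zetaX m : `|zeta ^+ m| = 1.
Proof. by rewrite normrX norm_zeta expr1n. Qed.

Lemma vertex_WN m (a : vec) : is_vertex m a -> WN a.
Proof.
move=> va z; rewrite va /root horner_exp !hornerE expf_eq0 => /andP[_].
by rewrite addr_eq0 => /eqP ->; rewrite normrN norm_zetaX.
Qed.

Lemma vertex_sqnorm m (a : vec) : is_vertex m a -> sqnorm a = sqradius.
Proof.
move=> va; apply: (@complexI R); rewrite sqnorm_ccoef /sqradius rmorph_sum.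
apply: eq_big_nat => k kN; rewrite ccoef_coef // va coef_XaddC_exp subKn ?bin_sub; try lia.
by rewrite normrMn normrX norm_zetaX expr1n rmorphXn /= rmorph_nat.
Qed.

Lemma exp_XsubC_vertex (a : vec) t : apoly a = ('X - t%:P) ^+ N ->
  exists2 m, (1 <= m <= N)%N & is_vertex m a.
Proof.
move=> at_.
have : (- t) ^+ N = 1.
  have := coef_apoly a 0; rewrite at_ -horner_coef0 horner_exp !hornerE.
  by have -> : (0 == N)%N = false by lia.
case/(prim_rootP zeta_prim) => i ti.
exists (if i == 0%N :> nat then N else i); first by move: (ltn_ord i); case: eqP; lia.
rewrite /is_vertex at_ (_ : zeta ^+ _ = - t) ?polyCN //.
by case: eqP => [i0|_]; rewrite ti // i0 zetaXN expr0.
Qed.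

Lemma WN_sqradius_vertex (a : vec) : WN a -> sqnorm a = sqradius ->
  exists2 m, (1 <= m <= N)%N & is_vertex m a.
Proof. by move=> Wa /(WN_sqnorm_eq Wa) [t /exp_XsubC_vertex]. Qed.

(* Inverts [ccoef] on polynomials with [p`_j = (p`_(N - j))^*] for 0 < j < N. *)
Definition poly_coord (p : {poly C}) (j : nat) : R :=
  if (j.*2 < N)%N then Num.sqrt 2 * complex.Re p`_(N - j)
  else if (j.*2 == N)%N then complex.Re p`_(N - j)
  else Num.sqrt 2 * complex.Im p`_j.

Definition vec_of_poly (p : {poly C}) : vec := \row_(k < N.-1) poly_coord p k.+1.

Lemma acoord_vec_of_poly (p : {poly C}) j : (1 <= j < N)%N ->
  acoord (vec_of_poly p) j = poly_coord p j.
Proof.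
move=> jN; have jN' : (j.-1 < N.-1)%N by lia.
have j0 : (0 < j)%N by lia.
by have := acoordS (vec_of_poly p) jN'; rewrite prednK // => ->; rewrite mxE prednK.
Qed.

Lemma ccoef_vec_of_poly (p : {poly C}) k : (1 <= k < N)%N ->
  (forall j, (0 < j < N)%N -> p`_j = (p`_(N - j))^*) ->
  ccoef (vec_of_poly p) k = p`_(N - k).
Proof.
move=> kN p_conj; have sqrt2K : Num.sqrt 2 / 2 * Num.sqrt 2 = 1 :> R.
  by rewrite mulrAC -expr2 sqr_sqrtr ?ler0n // divff // pnatr_eq0.
rewrite /ccoef !acoord_vec_of_poly /poly_coord ?subKn; try lia.
have [k_lt|k_gt|k_half] := ltngtP k.*2 N.
- have [-> ->] : ((N - k).*2 < N)%N = false /\ ((N - k).*2 == N)%N = false by lia.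
  by rewrite !mulrA sqrt2K !mul1r; case: (p`_(N - k)).
- have -> : ((N - k).*2 < N)%N by lia.
  rewrite !mulrA sqrt2K !mul1r (p_conj k) //.
  by case: (p`_(N - k)) => x y /=; rewrite opprK.
- have := p_conj k kN; rewrite (_ : N - k = k)%N; last by lia.
  by case: (p`_k) => x y /= [y0]; congr (_ +i* _); lra.
Qed.

Lemma apoly_vec_of_poly (p : {poly C}) :
  (size p <= N.+1)%N -> p`_N = 1 -> p`_0 = 1 ->
  (forall j, (0 < j < N)%N -> p`_j = (p`_(N - j))^*) ->
  apoly (vec_of_poly p) = p.
Proof.
move=> sp pN p0 p_conj; apply/polyP => i; rewrite coef_apoly.
have [->|iN] := eqVneq i N; first by [].
have [->|i0] := eqVneq i 0%N; first by [].
case: ltnP => [ltiN|leNi]; first by rewrite ccoef_vec_of_poly ?subKn //; lia.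
by rewrite nth_default //; apply: leq_trans sp _; lia.
Qed.

Definition vertex_poly m : {poly C} := ('X + (zeta ^+ m)%:P) ^+ N.

Lemma vertex_poly_conj m j : (0 < j < N)%N ->
  (vertex_poly m)`_j = ((vertex_poly m)`_(N - j))^*.
Proof.
move=> jN; rewrite !coef_XaddC_exp subKn ?bin_sub; try lia.
rewrite rmorphMn rmorphXn /=; congr (_ *+ _).
have wN : (zeta ^+ m) ^+ N = 1 by rewrite exprAC zetaXN expr1n.
set w := zeta ^+ m; have w1 : `|w| = 1 by exact: norm_zetaX.
have w0 : w != 0 by rewrite -normr_eq0 w1 oner_eq0.
have -> : w^* = w^-1 by rewrite invc_norm w1 expr1n invr1 mul1r.
rewrite exprVn; apply: (mulIf (expf_neq0 j w0)); rewrite -exprD subnK; last by lia.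
by rewrite wN mulVf // expf_neq0.
Qed.

Definition vertex_vec m : vec := vec_of_poly (vertex_poly m).

Lemma vertex_vecP m : is_vertex m (vertex_vec m).
Proof.
apply: apoly_vec_of_poly; last exact: vertex_poly_conj.
- by apply/leq_sizeP => i Ni; rewrite coef_XaddC_exp bin_small.
- by rewrite coef_XaddC_exp subnn binn.
- by rewrite coef_XaddC_exp subn0 bin0 exprAC zetaXN expr1n.
Qed.

Lemma sum_vertex_poly_coef j : (0 < j < N)%N ->
  \sum_(1 <= m < N.+1) (vertex_poly m)`_j = 0.
Proof.
move=> jN; under eq_bigr do rewrite coef_XaddC_exp exprAC.
rewrite sumrMnl sum_exp_unity_root ?mul0rn //; first by rewrite exprAC zetaXN expr1n.
by rewrite -(prim_order_dvd zeta_prim) gtnNdvd //; lia.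
Qed.

Lemma sum_vertex_vec : \sum_(1 <= m < N.+1) vertex_vec m = 0.
Proof.
have Re_sum (F : nat -> C) :
    complex.Re (\sum_(1 <= m < N.+1) F m) = \sum_(1 <= m < N.+1) complex.Re (F m).
  by apply: (big_morph (@complex.Re R)) => // -[x1 y1] [x2 y2].
have Im_sum (F : nat -> C) :
    complex.Im (\sum_(1 <= m < N.+1) F m) = \sum_(1 <= m < N.+1) complex.Im (F m).
  by apply: (big_morph (@complex.Im R)) => // -[x1 y1] [x2 y2].
apply/rowP => k; rewrite summxE mxE.
under eq_bigr do rewrite mxE.
have kN := ltn_ord k; rewrite /poly_coord.
have [_|_|_] := ltngtP k.+1.*2 N.
- by rewrite -mulr_sumr -Re_sum sum_vertex_poly_coef ?mulr0 //; lia.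
- by rewrite -mulr_sumr -Im_sum sum_vertex_poly_coef ?mulr0 //; lia.
- by rewrite -Re_sum sum_vertex_poly_coef //; lia.
Qed.

(* Since the vertices sum to 0 and have norm sqradius, the squared distances from
   p to them add up to N (sqradius + sqnorm p). *)
Lemma vertices_ball_center (p : vec) :
  (forall m, (1 <= m <= N)%N -> sqnorm (vertex_vec m - p) <= sqradius) -> p = 0.
Proof.
move=> near_p.
have sum_const (x : R) : \sum_(1 <= m < N.+1) x = x *+ N by rewrite sumr_const_nat subn1.
have sum_sq : \sum_(1 <= m < N.+1) sqnorm (vertex_vec m - p) = (sqradius + sqnorm p) *+ N.
  under eq_bigr do rewrite sqnormB (vertex_sqnorm (vertex_vecP _)).
  rewrite !big_split /= !sum_const sumrN -mulr_sumr exchange_big /= mulrnDl.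
  rewrite big1 ?mulr0 ?subr0 // => j _; rewrite -mulr_suml.
  by have := congr1 (fun v : vec => v 0 j) sum_vertex_vec; rewrite summxE mxE => ->; rewrite mul0r.
have : (sqradius + sqnorm p) *+ N <= sqradius *+ N.
  by rewrite -sum_sq -sum_const big_nat [X in _ <= X]big_nat ler_sum.
rewrite lerMn2r gtn_eqF ?(ltnW N_ge2) //= gerDl => le0.
by apply: sqnorm_eq0; apply/eqP; rewrite eq_le le0 sqnorm_ge0.
Qed.

Lemma WN0 : WN (0 : vec).
Proof.
move=> z; have acoord0 j : acoord (0 : vec) j = 0.
  by rewrite /acoord; case: ifP => // _; case: insub => // k; rewrite mxE.
have -> : apoly (0 : vec) = 'X^N + 1.
  rewrite /apoly big1 ?addr0 // => n _.
  have -> : ccoef (0 : vec) n = 0.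
    by rewrite /ccoef !acoord0 !mulr0 oppr0; case: ifP => //; case: ifP.
  by rewrite mul0r.
rewrite rootE !hornerE addr_eq0 => /eqP zN.
have /eqP : `|z| ^+ N = 1 by rewrite -normrX zN normrN normr1.
by rewrite pexpr_eq1 ?normr_ge0 ?(ltnW N_ge2) // => /eqP.
Qed.

Section Isometry.
Variable T : vec -> vec.
Hypothesis T_WN : forall u, WN u -> WN (T u).
Hypothesis T_onto : forall w, WN w -> exists2 u, WN u & T u = w.
Hypothesis T_iso : forall u v, WN u -> WN v -> edist (T u) (T v) = edist u v.

Lemma isometry_sqnorm u v : WN u -> WN v -> sqnorm (T u - T v) = sqnorm (u - v).
Proof.
move=> Wu Wv; have := T_iso Wu Wv; rewrite !edistE => /(congr1 (fun x => x ^+ 2)).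
by rewrite !sqr_sqrtr ?sqnorm_ge0.
Qed.

Lemma isometry_fixes0 : T 0 = 0.
Proof.
apply: vertices_ball_center => m _; have W0 := WN0.
have [u Wu <-] := T_onto (vertex_WN (vertex_vecP m)).
by rewrite isometry_sqnorm // subr0 WN_sqnorm_le.
Qed.

Lemma isometry_sqnorm0 u : WN u -> sqnorm (T u) = sqnorm u.
Proof.
by move=> Wu; have W0 := WN0; rewrite -[T u]subr0 -isometry_fixes0 isometry_sqnorm // subr0.
Qed.

Lemma isometry_vertex n a : is_vertex n a ->
  exists2 m, (1 <= m <= N)%N & is_vertex m (T a).
Proof.
move=> va; have Wa := vertex_WN va.
apply: WN_sqradius_vertex; first exact: T_WN.
by rewrite isometry_sqnorm0 // (vertex_sqnorm va).
Qed.

Lemma isometry_vertex_onto m b : is_vertex m b ->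
  exists n, exists2 a, (1 <= n <= N)%N /\ is_vertex n a & T a = b.
Proof.
move=> vb; have [a Wa Tab] := T_onto (vertex_WN vb).
have [n n_range va] : exists2 n, (1 <= n <= N)%N & is_vertex n a.
  by apply: WN_sqradius_vertex; rewrite // -isometry_sqnorm0 // Tab (vertex_sqnorm vb).
by exists n, a.
Qed.

End Isometry.
End W_N.

Theorem mainTheorem11 (R : realType) (N : nat) (hN : (2 <= N)%N)
    (T : 'rV[R]_(N.-1) -> 'rV[R]_(N.-1))
    (hTW : forall u, WN u -> WN (T u))
    (hTsurj : forall w, WN w -> exists2 u, WN u & T u = w)
    (hTinj : forall u v, WN u -> WN v -> T u = T v -> u = v)
    (hTiso : forall u v, WN u -> WN v -> edist (T u) (T v) = edist u v) :
  T 0 = 0 /\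
  (forall n a, (1 <= n <= N)%N -> is_vertex n a ->
     exists2 m, (1 <= m <= N)%N & is_vertex m (T a)) /\
  (forall m b, (1 <= m <= N)%N -> is_vertex m b ->
     exists n, exists2 a, (1 <= n <= N)%N /\ is_vertex n a & T a = b).
Proof.
split; first exact: (isometry_fixes0 hN hTsurj hTiso).
split=> [n a _ | m b _]; first exact: (isometry_vertex hN hTW hTsurj hTiso).
exact: (isometry_vertex_onto hN hTsurj hTiso).
Qed.
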